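(* Let $n\ge 1$, let $\delta_t>0$, and let $\mathbf{K}\in\mathbb{R}^{n\times n}$ be a real symmetric matrix all of whose eigenvalues $\lambda_{\mathbf{K},1},\dots,\lambda_{\mathbf{K},n}$ are strictly positive; let $\overline{\lambda}_{\mathbf{K}}=\max_j \lambda_{\mathbf{K},j}$. Let $\mathbf{B}\in\mathbb{R}^n$ and let $\alpha,\beta\in\mathbb{R}$. Consider the discrete-time linear system (for $\mathbf{Y}[m]\in\mathbb{R}^n$, scalar input $y_d[m]$) $$\mathbf{Y}[m+1]=\mathbf{Y}[m]-\alpha\beta\delta_t\mathbf{K}\mathbf{Y}[m]+\alpha\beta\delta_t\mathbf{B}\,y_d[m]+(\mathbf{I}-\beta\mathbf{K})\big(\mathbf{Y}[m]-\mathbf{Y}[m-1]\big).$$ Then this system is (asymptotically) stable, i.e. every root $z$ of $$\det\Big(\mathbf{I}z^2-\big(\mathbf{I}-\alpha\beta\delta_t\mathbf{K}+(\mathbf{I}-\beta\mathbf{K})\big)z+(\mathbf{I}-\beta\mathbf{K})\Big)=0$$ satisfies $|z|<1$ (equivalently, for every eigenvalue $\lambda=\lambda_{\mathbf{K},k}$, both roots of $z^2-\big(1-\alpha\beta\delta_t\lambda+(1-\beta\lambda)\big)z+(1-\beta\lambda)=0$ lie in the open unit disk), if and only if $$\text{(i)}\ \ \alpha>0\qquad\text{and}\qquad \text{(ii)}\ \ 0<\beta<\frac{4}{\overline{\lambda}_{\mathbf{K}}\,(\alpha\delta_t+2)}.$$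
   Context: In the paper, $\mathbf{K}$ is the pinned Laplacian of a network of $n$ robots attached to a flexible object: $\mathbf{K}_{k,k}=\hat{k}_{k,d}+\sum_{m}\hat{k}_{k,m}$ and $\mathbf{K}_{k,j}=-\hat{k}_{k,j}$ for $k\neq j$, where $\hat{k}_{k,j}=\hat{k}_{j,k}\ge 0$ are effective stiffnesses (with $\hat{k}_{j,j}=0$) and $\hat{k}_{k,d}\ge0$ is nonzero only for leader robots; it is assumed to have real strictly positive eigenvalues. $\mathbf{B}$ has entries $B_k=\hat{k}_{k,d}$, $\mathbf{Y}$ is the vector of robot positions, $y_d$ the desired position, $\delta_t>0$ the sampling period, and $\alpha,\beta$ are the gains of the delayed-self-reinforcement update. Stability refers to the homogeneous recurrence (input $y_d$ irrelevant), i.e. all characteristic roots strictly inside the unit circle. *)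

From HB Require Import structures.
From mathcomp Require Import all_boot all_order all_algebra.
From mathcomp Require Import complex.
Set Implicit Arguments. Unset Strict Implicit. Unset Printing Implicit Defensive.
Import Order.TTheory GRing.Theory Num.Theory.
Local Open Scope ring_scope.

Definition dsr_charmx (R : rcfType) (n : nat) (K : 'M[R]_n)
  (alpha beta dt : R) (z : R[i]) : 'M[R[i]]_n :=
  let Kc := map_mx (real_complex R) K in
  (z ^+ 2)%:M
  - z *: (1%:M - (real_complex R (alpha * beta * dt)) *: Kc + (1%:M - (real_complex R beta) *: Kc))
  + (1%:M - (real_complex R beta) *: Kc).

Definition dsr_stable (R : rcfType) (n : nat) (K : 'M[R]_n)
  (alpha beta dt : R) : Prop :=
  forall z : R[i], \det (dsr_charmx K alpha beta dt z) = 0 -> `|z| < 1.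

From HB Require Import structures.
From mathcomp Require Import all_boot all_order all_algebra.
From mathcomp Require Import complex.
From mathcomp Require Import ring lra.
Import Order.TTheory GRing.Theory Num.Theory.
Local Open Scope ring_scope.
Local Open Scope complex_scope.
Local Open Scope sesquilinear_scope.

(* The characteristic matrix splits as (z - 1)^2 I + g(z) K, where
   g(z) = z (a b dt) + z b - b is a scalar.  Since K is real symmetric, every
   complex eigenvalue of K is real, so det = 0 at z exactly when, for some
   eigenvalue r of K, z is a root of the scalar quadratic
     z^2 - (2 - b r (a dt + 1)) z + (1 - b r).
   Stability is therefore the statement that, for every eigenvalue r, both
   roots of this real monic quadratic lie in the open unit disk.  By the
   Schur-Cohn (Jury) criterion, z^2 + p z + q has its roots in the unit disk
   iff q < 1, 1 + p + q > 0 and 1 - p + q > 0; here these read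
     0 < b r,   0 < b r a dt,   b r (a dt + 2) < 4,
   and as 0 < r <= lmax they hold for all eigenvalues r iff they hold for
   r = lmax, which is the claimed condition on alpha and beta. *)

Section QuadraticJury.
Variable R : rcfType.

Definition roots_in_unit_disk (p q : R) : Prop :=
  forall z : R[i], z ^+ 2 + p%:C * z + q%:C = 0 -> `|z| < 1.

Definition jury_conditions (p q : R) : Prop :=
  q < 1 /\ 0 < 1 + p + q /\ 0 < 1 - p + q.

Lemma normc_lt1 (x y : R) : (`|x +i* y| < 1) = (x ^+ 2 + y ^+ 2 < 1).
Proof.
rewrite normc_def ltcE /= eqxx /= -{1}sqrtr1 ltr_sqrt ?ltr01 //.
Qed.

Lemma complex_quadratic_rootE (x y p q : R) :
  ((x +i* y) ^+ 2 + p%:C * (x +i* y) + q%:C = 0) <->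
  (x ^+ 2 - y ^+ 2 + p * x + q = 0 /\ 2 * x * y + p * y = 0).
Proof.
split.
- move=> /eqP; rewrite eq_complex /= => /andP[/eqP h1 /eqP h2].
  by split; [rewrite -h1 | rewrite -h2]; ring.
- move=> [h1 h2]; apply/eqP; rewrite eq_complex /=.
  by apply/andP; split; apply/eqP; [rewrite -[RHS]h1 | rewrite -[RHS]h2]; ring.
Qed.

(* A real root of x^2 + p x + q lies in (-1, 1) under the Jury conditions:
   the quadratic is positive at -1 and 1 and its vertex lies in between. *)
Lemma jury_real_root {p q x : R} :
  jury_conditions p q -> x ^+ 2 + p * x + q = 0 -> x ^+ 2 < 1.
Proof.
move=> [hq [h1 h2]] hx.
have hx1 : x < 1.
  rewrite ltNge; apply/negP => hx1.
  have : 0 <= (2 + p) * (x - 1) by apply: mulr_ge0; lra.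
  have : 0 <= (x - 1) ^+ 2 by apply: sqr_ge0.
  nra.
have hx2 : -1 < x.
  rewrite ltNge; apply/negP => hx2.
  have : 0 <= (2 - p) * (-1 - x) by apply: mulr_ge0; lra.
  have : 0 <= (x + 1) ^+ 2 by apply: sqr_ge0.
  nra.
nra.
Qed.

(* Sufficiency: a non-real root is one of a conjugate pair with product q,
   so its squared modulus is q < 1; real roots are handled above. *)
Lemma jury_sufficient (p q : R) :
  jury_conditions p q -> roots_in_unit_disk p q.
Proof.
move=> hjury [x y] /complex_quadratic_rootE [e1 e2]; rewrite normc_lt1.
have [y0 | y_neq0] := eqVneq y 0.
  subst y; rewrite expr0n /= addr0; apply: (jury_real_root hjury).
  by rewrite -e1; ring.
have hp : p = - (2 * x).
  suff : (2 * x + p) * y = 0.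
    by move/eqP; rewrite mulf_eq0 (negPf y_neq0) orbF => /eqP; lra.
  by rewrite -e2; ring.
by move: hjury => [hq _]; rewrite hp in e1; nra.
Qed.

(* Two reals in (-1, 1) are the roots of a quadratic satisfying the Jury
   conditions: 1 -+ (r1 + r2) + r1 r2 = (1 -+ r1)(1 -+ r2) > 0. *)
Lemma jury_of_real_roots {r1 r2 : R} :
  -1 < r1 < 1 -> -1 < r2 < 1 -> jury_conditions (- (r1 + r2)) (r1 * r2).
Proof. by move=> /andP[a1 a2] /andP[b1 b2]; split; [nra | split; nra]. Qed.

(* Necessity: if the discriminant is nonnegative, both real roots lie in
   (-1, 1); otherwise the roots are conjugate with squared modulus q < 1, and
   p^2 < 4 q <= (1 + q)^2 gives the two remaining conditions. *)
Lemma jury_necessary (p q : R) :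
  roots_in_unit_disk p q -> jury_conditions p q.
Proof.
move=> hdisk.
have [hD | hD] := lerP 0 (p ^+ 2 - 4 * q).
- have real_root_in (r : R) : r ^+ 2 + p * r + q = 0 -> -1 < r < 1.
    move=> hr; have hz : (r +i* 0) ^+ 2 + p%:C * (r +i* 0) + q%:C = 0.
      by apply/complex_quadratic_rootE; split; [rewrite -[RHS]hr |]; ring.
    have := hdisk _ hz; rewrite normc_lt1 expr0n /= addr0 => hr2.
    by apply/andP; split; nra.
  set s := Num.sqrt (p ^+ 2 - 4 * q).
  have hs : s ^+ 2 = p ^+ 2 - 4 * q by rewrite sqr_sqrtr.
  have hroot (r : R) : r = (- p + s) / 2 \/ r = (- p - s) / 2 ->
      r ^+ 2 + p * r + q = 0.
    move=> hr; have -> : r ^+ 2 + p * r + q = ((2 * r + p) ^+ 2 - s ^+ 2) / 4.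
      by rewrite hs; field.
    by case: hr => ->; field.
  have := jury_of_real_roots (real_root_in _ (hroot _ (or_introl erefl)))
                             (real_root_in _ (hroot _ (or_intror erefl))).
  have -> : - ((- p + s) / 2 + (- p - s) / 2) = p by field.
  have -> // : (- p + s) / 2 * ((- p - s) / 2) = q.
  have -> : (- p + s) / 2 * ((- p - s) / 2) = (p ^+ 2 - s ^+ 2) / 4 by field.
  by rewrite hs; field.
- set t := Num.sqrt (4 * q - p ^+ 2).
  have ht : t ^+ 2 = 4 * q - p ^+ 2 by rewrite sqr_sqrtr //; lra.
  have hmod : (- p / 2) ^+ 2 + (t / 2) ^+ 2 = q.
    have -> : (- p / 2) ^+ 2 + (t / 2) ^+ 2 = (p ^+ 2 + t ^+ 2) / 4 by field.
    by rewrite ht; field.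
  set z := (- p / 2) +i* (t / 2).
  have hz : z ^+ 2 + p%:C * z + q%:C = 0.
    apply/complex_quadratic_rootE; split; last by field.
    have -> : (- p / 2) ^+ 2 - (t / 2) ^+ 2 + p * (- p / 2) + q
              = (4 * q - p ^+ 2 - t ^+ 2) / 4 by field.
    by rewrite ht subrr mul0r.
  have := hdisk _ hz; rewrite normc_lt1 hmod => hq.
  by split; [| split]; nra.
Qed.

Theorem jury_criterion (p q : R) :
  roots_in_unit_disk p q <-> jury_conditions p q.
Proof. by split; [exact: jury_necessary | exact: jury_sufficient]. Qed.

End QuadraticJury.

Arguments roots_in_unit_disk {R}.
Arguments jury_conditions {R}.
Arguments jury_criterion {R p q}.

Section SymmetricEigenvalues.
Variables (R : rcfType) (n : nat) (K : 'M[R]_n).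
Hypothesis K_sym : K^T = K.

Let Kc : 'M[R[i]]_n := map_mx (real_complex R) K.

Lemma complexified_hermitian : Kc ^t* = Kc.
Proof.
by apply/matrixP => i j; rewrite !mxE -[in RHS]K_sym mxE; apply: conjc_real.
Qed.

(* Rayleigh quotient: for an eigenvector v, v Kc v^* equals both mu |v|^2 and
   its own conjugate transpose conj(mu) |v|^2, and |v|^2 <> 0. *)
Lemma symmetric_eigenvalue_conj {v : 'rV[R[i]]_n} {mu : R[i]} :
  v != 0 -> v *m Kc = mu *: v -> mu^* = mu.
Proof.
move=> v_neq0 hv.
have dot_neq0 : (v *m v ^t*) 0 0 != 0.
  by have := dnorm_gt0 (@dotmx R[i] n) v; rewrite v_neq0 /= dotmxE => /lt0r_neq0.
have hvT : Kc *m v ^t* = mu^* *: v ^t*.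
  by rewrite -complexified_hermitian -map_mxM -trmx_mul hv linearZ /= map_mxZ.
have : (v *m Kc *m v ^t*) 0 0 = (v *m (Kc *m v ^t*)) 0 0 by rewrite mulmxA.
rewrite hv hvT -scalemxAl -scalemxAr [LHS]mxE [RHS]mxE => /eqP.
by rewrite -subr_eq0 -mulrBl mulf_eq0 (negPf dot_neq0) orbF subr_eq0 => /eqP.
Qed.

Lemma symmetric_eigenvalue_real {v : 'rV[R[i]]_n} {mu : R[i]} :
  v != 0 -> v *m Kc = mu *: v -> exists2 r : R, mu = r%:C & eigenvalue K r.
Proof.
move=> v_neq0 hv.
have mu_real : mu = (complex.Re mu)%:C.
  by rewrite ReJ_add (symmetric_eigenvalue_conj v_neq0 hv); field.
exists (complex.Re mu) => //.
have : eigenvalue Kc (complex.Re mu)%:C.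
  by apply/eigenvalueP; exists v; rewrite -?mu_real.
by rewrite eigenvalue_root_char -map_char_poly fmorph_root -eigenvalue_root_char.
Qed.

End SymmetricEigenvalues.

Arguments symmetric_eigenvalue_real {R n K} K_sym {v mu}.

Section DSRCharacteristicMatrix.
Variables (R : rcfType) (n : nat) (K : 'M[R]_n) (alpha beta dt : R).

Let Kc : 'M[R[i]]_n := map_mx (real_complex R) K.

Definition dsr_gain (z : R[i]) : R[i] :=
  z * (alpha * beta * dt)%:C + z * beta%:C - beta%:C.

Definition dsr_p (r : R) : R := - (2 - beta * r * (alpha * dt + 1)).
Definition dsr_q (r : R) : R := 1 - beta * r.

Lemma dsr_charmx_split (z : R[i]) :
  dsr_charmx K alpha beta dt z = ((z - 1) ^+ 2)%:M + dsr_gain z *: Kc.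
Proof.
apply/matrixP => i j; rewrite /dsr_charmx /dsr_gain !mxE.
by case: (i == j); rewrite ?mulr1n ?mulr0n; ring.
Qed.

Lemma dsr_charmx_eigenvector {v : 'rV[R[i]]_n} {r : R} (z : R[i]) :
  v *m Kc = r%:C *: v ->
  v *m dsr_charmx K alpha beta dt z
  = (z ^+ 2 + (dsr_p r)%:C * z + (dsr_q r)%:C) *: v.
Proof.
move=> hv; rewrite dsr_charmx_split mulmxDr mul_mx_scalar -scalemxAr hv.
rewrite scalerA -scalerDl; congr (_ *: _).
rewrite /dsr_gain /dsr_p /dsr_q.
by rewrite !(rmorphB, rmorphD, rmorphM, rmorphN, rmorph1, rmorph_nat); ring.
Qed.

(* Conversely, when alpha beta dt <> 0, a singular characteristic matrix comes
   from a real eigenvalue r of the symmetric matrix K: a null vector v gives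
   (z - 1)^2 v + g(z) v Kc = 0 with g(z) <> 0, so v is an eigenvector of Kc. *)
Lemma dsr_charmx_singular {z : R[i]} :
  K^T = K -> alpha * beta * dt != 0 ->
  \det (dsr_charmx K alpha beta dt z) = 0 ->
  exists2 r : R, eigenvalue K r & z ^+ 2 + (dsr_p r)%:C * z + (dsr_q r)%:C = 0.
Proof.
move=> K_sym abdt_neq0 /eqP /det0P [v v_neq0 hv].
have hsplit : (z - 1) ^+ 2 *: v + dsr_gain z *: (v *m Kc) = 0.
  by rewrite -hv dsr_charmx_split mulmxDr mul_mx_scalar scalemxAr.
have gain_neq0 : dsr_gain z != 0.
  apply/negP => /eqP g0; move: hsplit; rewrite g0 scale0r addr0 => /eqP.
  rewrite scaler_eq0 (negPf v_neq0) orbF expf_eq0 /= subr_eq0 => /eqP z1.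
  move: g0; rewrite /dsr_gain z1 !mul1r addrK => /eqP.
  by rewrite (inj_eq (@complexI R)) (negPf abdt_neq0).
have hmu : v *m Kc = (- (z - 1) ^+ 2 / dsr_gain z) *: v.
  apply: (scalerI gain_neq0); rewrite scalerA mulrC divfK // scaleNr.
  by apply/eqP; rewrite -addr_eq0 addrC hsplit.
have [r mu_r hr] := symmetric_eigenvalue_real K_sym v_neq0 hmu.
rewrite mu_r in hmu; exists r => //.
apply/eqP; move: hv; rewrite (dsr_charmx_eigenvector z hmu) => /eqP.
by rewrite scaler_eq0 (negPf v_neq0) orbF.
Qed.

(* Stability puts the roots of every eigenvalue's quadratic in the unit disk:
   a real eigenvector of K, complexified, is a null vector of the
   characteristic matrix at each such root. *)
Lemma dsr_stable_eigen_roots :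
  dsr_stable K alpha beta dt ->
  forall r : R, eigenvalue K r -> roots_in_unit_disk (dsr_p r) (dsr_q r).
Proof.
move=> stable r /eigenvalueP [u hu u_neq0] z hz.
apply: stable; apply/eqP/det0P.
exists (map_mx (real_complex R) u); first by rewrite map_mx_eq0.
have hv : map_mx (real_complex R) u *m Kc = r%:C *: map_mx (real_complex R) u.
  by rewrite -map_mxM hu map_mxZ.
by rewrite (dsr_charmx_eigenvector z hv) hz scale0r.
Qed.

Lemma eigen_roots_dsr_stable :
  K^T = K -> alpha * beta * dt != 0 ->
  (forall r : R, eigenvalue K r -> roots_in_unit_disk (dsr_p r) (dsr_q r)) ->
  dsr_stable K alpha beta dt.
Proof.
move=> K_sym abdt_neq0 eigen_roots z.
move=> /(dsr_charmx_singular K_sym abdt_neq0) [r hr hz].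
exact: eigen_roots hr z hz.
Qed.

Lemma dsr_jury_conditions (r : R) :
  jury_conditions (dsr_p r) (dsr_q r) <->
  [/\ 0 < beta * r, 0 < beta * r * (alpha * dt) & beta * r * (alpha * dt + 2) < 4].
Proof.
rewrite /jury_conditions /dsr_p /dsr_q.
by split => [[? [? ?]] | [? ? ?]]; [split | split; [| split]]; lra.
Qed.

End DSRCharacteristicMatrix.

Theorem lemma1 (R : rcfType) (n : nat) (K : 'M[R]_n) (B : 'cV[R]_n)
  (alpha beta dt lmax : R) :
  (0 < n)%N ->
  0 < dt ->
  K^T = K ->
  (forall a : R, eigenvalue K a -> 0 < a) ->
  eigenvalue K lmax ->
  (forall a : R, eigenvalue K a -> a <= lmax) ->
  dsr_stable K alpha beta dt <->
  (0 < alpha /\ 0 < beta /\ beta < 4 / (lmax * (alpha * dt + 2))).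
Proof.
move=> _ dt_gt0 K_sym eig_gt0 lmax_eig lmax_max.
have lmax_gt0 := eig_gt0 _ lmax_eig.
split.
- move=> /dsr_stable_eigen_roots /(_ _ lmax_eig) /jury_criterion.
  move=> /dsr_jury_conditions [blmax_gt0 blmax_adt_gt0 blmax_lt4].
  have beta_gt0 : 0 < beta by rewrite -(pmulr_lgt0 _ lmax_gt0).
  have adt_gt0 : 0 < alpha * dt by rewrite -(pmulr_rgt0 _ blmax_gt0).
  split; first by rewrite -(pmulr_lgt0 _ dt_gt0).
  split; first by [].
  by rewrite ltr_pdivlMr ?mulrA // mulr_gt0 // addr_gt0.
- move=> [alpha_gt0 [beta_gt0 beta_lt]].
  have adt_gt0 : 0 < alpha * dt by rewrite mulr_gt0.
  apply: eigen_roots_dsr_stable => //.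
    by rewrite -mulrA mulf_neq0 ?lt0r_neq0 // mulr_gt0.
  move=> r r_eig; apply/jury_criterion/dsr_jury_conditions.
  have r_gt0 := eig_gt0 _ r_eig.
  have r_le := lmax_max _ r_eig.
  have br_gt0 : 0 < beta * r by rewrite mulr_gt0.
  split; [by [] | by rewrite mulr_gt0 |].
  rewrite ltr_pdivlMr ?mulr_gt0 ?addr_gt0 // mulrA in beta_lt.
  apply: le_lt_trans beta_lt; rewrite ler_pM2r ?addr_gt0 // ler_pM2l //.
Qed.
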